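(* Let $(M,d)$ be a metric space, $A\subseteq M$ finite and $\beta>0$. For all $r,k>0$: (i) $\mathrm{Cr}^\beta_{r,k}(A)\subseteq\mathrm{Cov}_{(1+\beta^{-1})r,k}(A)$, and (ii) $\mathrm{Cov}_{r,k}(A)\subseteq\mathrm{Cr}^\beta_{\max\{1,2\beta\}r,k}(A)$.
   Context: $\bar B_d(x,r)=\{y\in M:d(x,y)\le r\}$. For finite $A\subseteq M$, $k>0$, $x\in M$, the $k$-core distance $\mathrm{core}^A_k(x)\in[0,\infty]$ is the distance from $x$ to its $\lceil k\rceil$-th nearest neighbor in $A$ (each point of $A$ counted once, $x$ itself counting if $x\in A$); equivalently $\mathrm{core}^A_k(x)=\min\{r\ge0:|\bar B_d(x,r)\cap A|\ge k\}$, and it is $\infty$ if $k>|A|$. The multicover bifiltration is $\mathrm{Cov}_{r,k}(A)=\{x\in M:|\bar B_d(x,r)\cap A|\ge k\}$. For $\beta>0$, $\Lambda^\beta_k(a,x)=\max\{\beta\,\mathrm{core}^A_k(a),d(a,x)\}$ ($a\in A$, $x\in M$), $B^\beta_{r,k}(a)=\{x\in M:\Lambda^\beta_k(a,x)\le r\}$, and the core bifiltration is $\mathrm{Cr}^\beta_{r,k}(A)=\bigcup_{a\in A}B^\beta_{r,k}(a)$. *)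

From HB Require Import structures.
From mathcomp Require Import all_boot all_order all_algebra.
From mathcomp Require Import finmap.
From mathcomp Require Import all_classical all_reals ereal.
Set Implicit Arguments. Unset Strict Implicit. Unset Printing Implicit Defensive.
Import Order.TTheory GRing.Theory Num.Theory.
Local Open Scope ring_scope.
Local Open Scope classical_set_scope.


Definition is_metric (R : realType) (M : Type) (d : M -> M -> R) : Prop :=
  [/\ forall x y, 0 <= d x y,
      forall x y, d x y = 0 <-> x = y,
      forall x y, d x y = d y x &
      forall x y z, d x z <= d x y + d y z].

Definition ball_count (R : realType) (M : choiceType) (d : M -> M -> R)
  (A : {fset M}) (x : M) (r : R) : nat :=
  #|` [fset a in A | d x a <= r]%fset |%fset.

(* k-core distance: min { r >= 0 : |B(x,r) ∩ A| >= k } in [0, +oo];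
   +oo when no such r exists (i.e. k > |A|). The inf is attained when finite. *)
Definition core_dist (R : realType) (M : choiceType) (d : M -> M -> R)
  (A : {fset M}) (k : R) (x : M) : \bar R :=
  ereal_inf [set (r%:E) | r in [set r : R | 0 <= r /\ k <= (ball_count d A x r)%:R]].

Definition Cov (R : realType) (M : choiceType) (d : M -> M -> R)
  (A : {fset M}) (r k : R) : set M :=
  [set x | k <= (ball_count d A x r)%:R].

Definition Lambda (R : realType) (M : choiceType) (d : M -> M -> R)
  (A : {fset M}) (beta k : R) (a x : M) : \bar R :=
  Order.max ((beta%:E) * core_dist d A k a)%E (d a x)%:E.

Definition Bcore (R : realType) (M : choiceType) (d : M -> M -> R)
  (A : {fset M}) (beta r k : R) (a : M) : set M :=
  [set x | (Lambda d A beta k a x <= r%:E)%E].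

Definition Cr (R : realType) (M : choiceType) (d : M -> M -> R)
  (A : {fset M}) (beta r k : R) : set M :=
  \bigcup_(a in [set a | a \in A]) Bcore d A beta r k a.

(** Two observations suffice.  First, since [A] is finite, the number of points
    of [A] in the closed ball [B(x, c)] is right-continuous in [c], so the
    infimum defining the core distance is attained: [core_k(a) <= c] iff
    [|B(a, c) ∩ A| >= k].  Second, by the triangle inequality
    [B(a, c) ⊆ B(x, d(x, a) + c)].
    (i) If [x ∈ B^β_{r,k}(a)] then [|B(a, r/β) ∩ A| >= k] and [d(x, a) <= r],
        so [|B(x, r + r/β) ∩ A| >= k].
    (ii) If [x ∈ Cov_{r,k}(A)], the ball [B(x, r)] contains some [a ∈ A]; then
        [B(x, r) ⊆ B(a, 2r)], so [core_k(a) <= 2r] and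
        [Λ^β_k(a, x) <= max(2βr, r) = max(1, 2β) r]. *)
From HB Require Import structures.
From mathcomp Require Import all_boot all_order all_algebra.
From mathcomp Require Import finmap.
From mathcomp Require Import all_classical all_reals ereal.
From mathcomp Require Import lra.
Import Order.TTheory GRing.Theory Num.Theory.
Local Open Scope ring_scope.
Local Open Scope classical_set_scope.

Lemma exists_gap_above (T : eqType) (R : realFieldType) (s : seq T)
    (f : T -> R) (t : R) :
  exists2 e, 0 < e & forall b, b \in s -> f b <= t + e -> f b <= t.
Proof.
elim: s => [|c s [e e_gt0 gap_e]]; first by exists 1.
have [fc_le|t_lt_fc] := leP (f c) t.
  by exists e => // b; rewrite inE => /predU1P[->|/gap_e].
pose e' := Num.min e ((f c - t) / 2).
have [e'_le_e e'_le_half] : e' <= e /\ e' <= (f c - t) / 2.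
  by rewrite !ge_min !lexx orbT.
exists e'; first by rewrite lt_min e_gt0 divr_gt0 ?subr_gt0.
move=> b; rewrite inE => /predU1P[-> | /gap_e gap_b] fb_le; last by apply: gap_b; lra.
lra.
Qed.

Section BallCount.
Variables (R : realType) (M : choiceType) (d : M -> M -> R) (A : {fset M}).

Lemma ball_count_le x y s t :
  (forall b, b \in A -> d x b <= s -> d y b <= t) ->
  (ball_count d A x s <= ball_count d A y t)%N.
Proof.
move=> sub; apply: fsubset_leq_card; apply/fsubsetP => b.
by rewrite !inE /= => /andP[bA /(sub _ bA) ->]; rewrite bA.
Qed.

Lemma ball_count_radius_le x s t :
  s <= t -> (ball_count d A x s <= ball_count d A x t)%N.
Proof. by move=> st; apply: ball_count_le => b _ /le_trans; apply. Qed.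

Lemma ball_count_right_continuous x t :
  exists2 e, 0 < e & (ball_count d A x (t + e) <= ball_count d A x t)%N.
Proof.
have [e e_gt0 gap_e] := @exists_gap_above _ _ (enum_fset A) (d x) t.
by exists e => //; apply: ball_count_le => b; apply: gap_e.
Qed.

Lemma core_dist_le k x c : 0 <= c ->
  (core_dist d A k x <= c%:E)%E <-> k <= (ball_count d A x c)%:R.
Proof.
move=> c_ge0; split=> [core_le|k_le]; last first.
  by apply: ereal_inf_lbound; exists c.
have [e e_gt0 rc] := ball_count_right_continuous x c.
have : (core_dist d A k x < (c + e)%:E)%E.
  by apply: le_lt_trans core_le _; rewrite lte_fin ltrDl.
case/ereal_inf_lt => _ [r [_ k_le] <-]; rewrite lte_fin => /ltW r_le.
by apply: le_trans k_le _; rewrite ler_nat (leq_trans (ball_count_radius_le _ _ _ r_le)).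
Qed.

Hypothesis d_sym : forall x y, d x y = d y x.
Hypothesis d_triangle : forall x y z, d x z <= d x y + d y z.

Lemma ball_count_recenter a x s :
  (ball_count d A a s <= ball_count d A x (d x a + s))%N.
Proof.
by apply: ball_count_le => b _ ab_le; rewrite (le_trans (d_triangle x a b)) ?lerD2l.
Qed.

Variables (beta r k : R).
Hypotheses (beta_gt0 : 0 < beta) (r_gt0 : 0 < r) (k_gt0 : 0 < k).

Lemma Cr_sub_Cov : Cr d A beta r k `<=` Cov d A ((1 + beta^-1) * r) k.
Proof.
move=> x [a _]; rewrite /Bcore /Lambda /= ge_max => /andP[core_le].
rewrite lee_fin d_sym => xa_le.
have r_div_ge0 : 0 <= beta^-1 * r by rewrite mulr_ge0 ?invr_ge0 ?ltW.
move: core_le; rewrite -lee_pdivlMl // -EFinM => /(core_dist_le _ _ _ r_div_ge0) k_le.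
apply: (le_trans k_le); rewrite ler_nat (leq_trans (ball_count_recenter a x _)) //.
by apply: ball_count_radius_le; rewrite mulrDl mul1r lerD2r.
Qed.

Lemma Cov_sub_Cr : Cov d A r k `<=` Cr d A beta (Num.max 1 (2 * beta) * r) k.
Proof.
move=> x k_le; have : (0 < ball_count d A x r)%N.
  by rewrite -(ltr_nat R); apply: lt_le_trans k_le.
rewrite cardfs_gt0 => /fset0Pn[a]; rewrite !inE => /andP[aA xa_le].
have core_le : (core_dist d A k a <= (2 * r)%:E)%E.
  apply/core_dist_le; first by rewrite mulr_ge0 ?ltW.
  apply: (le_trans k_le); rewrite ler_nat (leq_trans (ball_count_recenter x a _)) //.
  by apply: ball_count_radius_le; rewrite d_sym; lra.
exists a => //; rewrite /Bcore /Lambda /= ge_max; apply/andP; split.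
  apply: le_trans (_ : ((2 * beta * r)%:E <= _)%E); last first.
    by rewrite lee_fin ler_pM2r // le_max lexx orbT.
  by rewrite (mulrC 2) -mulrA EFinM lee_wpmul2l // lee_fin ltW.
by rewrite lee_fin d_sym (le_trans xa_le) // ler_peMl ?le_max ?lexx // ltW.
Qed.

End BallCount.

Theorem mainTheorem3 (R : realType) (M : choiceType) (d : M -> M -> R)
  (A : {fset M}) (beta : R) :
  is_metric d -> 0 < beta ->
  forall r k : R, 0 < r -> 0 < k ->
    Cr d A beta r k `<=` Cov d A ((1 + beta^-1) * r) k /\
    Cov d A r k `<=` Cr d A beta (Num.max 1 (2 * beta) * r) k.
Proof.
move=> [_ _ d_sym d_triangle] beta_gt0 r k r_gt0 k_gt0.
by split; [apply: Cr_sub_Cov | apply: Cov_sub_Cr].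
Qed.
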